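(* For $z=x+iy$ with $x>1$ and $y\in\mathbb{R}$, \[|\zeta(z)|^2=\zeta(2x)\sum_{m=1}^{\infty}\frac{2^{\omega(m)}}{m^{x}}\prod_{p\mid m}\cos\big(y\ln p^{v_p(m)}\big).\]
   Context: $\zeta(s)=\sum_{n\ge1}n^{-s}$ for $\Re(s)>1$; $\omega(m)$ is the number of distinct prime divisors of $m$; $v_p(m)$ is the exponent of the prime $p$ in $m$; the product is over the primes dividing $m$ (empty product $=1$). *)

From Stdlib Require Import Reals.
From mathcomp Require Import ssreflect ssrbool ssrnat seq prime.
From Stdlib Require Import List.

Open Scope R_scope.

Definition omega (m : nat) : nat := size (primes m).

Definition cos_prod (y : R) (m : nat) : R :=
  List.fold_right Rmult 1
    (List.map (fun p : nat => cos (y * ln (INR (expn p (logn p m))))) (primes m)).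

(* n^{-(x+iy)} = n^{-x} (cos (y ln n) - i sin (y ln n)) *)
Definition zeta_re_term (x y : R) (n : nat) : R :=
  Rpower (INR n) (- x) * cos (y * ln (INR n)).
Definition zeta_im_term (x y : R) (n : nat) : R :=
  - (Rpower (INR n) (- x) * sin (y * ln (INR n))).

Definition zeta_real_term (s : R) (n : nat) : R := Rpower (INR n) (- s).

Definition rhs_term (x y : R) (m : nat) : R :=
  pow 2 (omega m) / Rpower (INR m) x * cos_prod y m.

(* Expand |zeta(z)|^2 = zeta(z) * conj (zeta(z)) as the double series over (a, b) of
   (a b)^(-x) cos (y ln a - y ln b).  Writing k = gcd(a, b), a = k d, b = k e, the pair
   (a, b) corresponds bijectively to k together with a factorisation m = d e into coprime
   factors, and (a b)^(-x) = k^(-2x) m^(-x).  The coprime factorisations of m arise by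
   giving each prime power p^(v_p(m)) either to d or to e, so the sum of
   cos (y ln d - y ln e) over them is Re prod_p (p^(i v y) + p^(-i v y))
   = 2^omega(m) prod_p cos (y ln p^(v_p(m))).  Grouping by (k, m) thus turns the double
   series into zeta(2x) times the right-hand side.  The regrouping is justified by
   absolute convergence: the pairs with k <= N and m <= N contain the square [1, sqrt N]^2
   and lie in the square [1, N^2]^2, and the sums of (a b)^(-x) over squares converge. *)

From HB Require Import structures.
From Stdlib Require Import Reals Lra Lia.
From mathcomp Require Import ssreflect ssrbool ssrfun eqtype ssrnat seq div bigop prime.
From mathcomp Require Import zify.

Set Implicit Arguments.
Unset Strict Implicit.
Unset Printing Implicit Defensive.

Open Scope R_scope.

HB.instance Definition _ := Monoid.isComLaw.Build R 0 Rplus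
  (fun x y z => esym (Rplus_assoc x y z)) Rplus_comm Rplus_0_l.
HB.instance Definition _ := Monoid.isComLaw.Build R 1 Rmult
  (fun x y z => esym (Rmult_assoc x y z)) Rmult_comm Rmult_1_l.
HB.instance Definition _ := Monoid.isMulLaw.Build R 0 Rmult Rmult_0_l Rmult_0_r.
HB.instance Definition _ := Monoid.isAddLaw.Build R Rmult Rplus
  Rmult_plus_distr_r Rmult_plus_distr_l.

Notation "\sum_ ( i <- r ) F" := (\big[Rplus/0]_(i <- r) F) : R_scope.
Notation "\sum_ ( i <- r | P ) F" := (\big[Rplus/0]_(i <- r | P) F) : R_scope.
Notation "\prod_ ( i <- r ) F" := (\big[Rmult/1]_(i <- r) F) : R_scope.

Section RealSums.

Variable I : eqType.
Implicit Types (s : seq I) (F G : I -> R).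

Lemma Rsum_le s F G : {in s, forall i, F i <= G i} ->
  \sum_(i <- s) F i <= \sum_(i <- s) G i.
Proof.
move=> FG; rewrite big_seq [X in _ <= X]big_seq.
by apply: (big_ind2 (fun a b => a <= b)) => [|a b c d|i /FG //]; lra.
Qed.

Lemma Rsum_ge0 s F : {in s, forall i, 0 <= F i} -> 0 <= \sum_(i <- s) F i.
Proof.
by move=> F0; rewrite big_seq; apply: (big_ind (fun a => 0 <= a)) => [|a b|i /F0 //]; lra.
Qed.

Lemma Rsum_le_const s F c : {in s, forall i, F i <= c} ->
  \sum_(i <- s) F i <= INR (size s) * c.
Proof.
elim: s => [|i s IH] Fc; rewrite ?big_nil ?big_cons; first by rewrite /=; lra.
have -> : INR (size (i :: s)) = INR (size s) + 1 by exact: S_INR.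
have := Fc i (mem_head i s).
have := IH (fun j js => Fc j (mem_behead (s := i :: s) js)); lra.
Qed.

Lemma Rabs_sum_le s F : Rabs (\sum_(i <- s) F i) <= \sum_(i <- s) Rabs (F i).
Proof.
elim: s => [|i s IH]; rewrite ?big_nil ?big_cons ?Rabs_R0; first lra.
by apply: Rle_trans (Rabs_triang _ _) _; lra.
Qed.

Lemma Rsum_subset_split s1 s2 F : uniq s1 -> uniq s2 -> {subset s1 <= s2} ->
  \sum_(i <- s2) F i = \sum_(i <- s1) F i + \sum_(i <- s2 | i \notin s1) F i.
Proof.
move=> u1 u2 s12; rewrite (bigID (mem s1)) /=; congr (_ + _).
rewrite -big_filter; apply/perm_big/uniq_perm; rewrite ?filter_uniq // => i.
by rewrite mem_filter; case: (boolP (i \in s1)) => // /s12 ->.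
Qed.

Lemma Rsum_subset_le s1 s2 F : uniq s1 -> uniq s2 -> {subset s1 <= s2} ->
  {in s2, forall i, 0 <= F i} -> \sum_(i <- s1) F i <= \sum_(i <- s2) F i.
Proof.
move=> u1 u2 s12 F0; rewrite (Rsum_subset_split F u1 u2 s12).
suff: 0 <= \sum_(i <- s2 | i \notin s1) F i by lra.
by rewrite -big_filter; apply: Rsum_ge0 => i; rewrite mem_filter => /andP[_ /F0].
Qed.

Lemma Rabs_sum_diff_le s1 s2 s3 c w :
  uniq s1 -> uniq s2 -> uniq s3 -> {subset s1 <= s2} -> {subset s2 <= s3} ->
  {in s3, forall i, Rabs (c i) <= w i} ->
  Rabs (\sum_(i <- s2) c i - \sum_(i <- s1) c i) <=
  \sum_(i <- s3) w i - \sum_(i <- s1) w i.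
Proof.
move=> u1 u2 u3 s12 s23 cw; have s13 : {subset s1 <= s3} by move=> i /s12 /s23.
rewrite (Rsum_subset_split c u1 u2 s12) (Rsum_subset_split w u1 u3 s13).
rewrite !Rplus_minus_l -(big_filter s2) -(big_filter s3).
apply: Rle_trans (Rabs_sum_le _ _) _; apply: Rle_trans (Rsum_le (G := w) _) _.
  by move=> i; rewrite mem_filter => /andP[_ /s23 /cw].
apply: Rsum_subset_le; rewrite ?filter_uniq // => i.
  by rewrite !mem_filter => /andP[-> /s23].
by rewrite mem_filter => /andP[_ /cw]; have := Rabs_pos (c i); lra.
Qed.

End RealSums.

Lemma Rabs_mul_le w c : 0 <= w -> Rabs c <= 1 -> Rabs (w * c) <= w.
Proof. by move=> w_ge0 c_le1; rewrite Rabs_mult Rabs_pos_eq //; nra. Qed.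

Lemma sqrt_square_le N : (Nat.sqrt N * Nat.sqrt N <= N)%N.
Proof. by apply/leP; case: (Nat.sqrt_spec N (Nat.le_0_l N)). Qed.

Lemma Un_cv_sqrt_bracket (u p w : nat -> R) lp lw :
  Un_cv (fun n => p n.+1) lp -> Un_cv (fun n => w n.+1) lw ->
  (forall N, Rabs (u N - p (Nat.sqrt N)) <= w (N * N)%N - w (Nat.sqrt N)) ->
  Un_cv (fun n => u n.+1) lp.
Proof.
move=> cv_p cv_w bracket e e_gt0; have e3_gt0 : e / 3 > 0 by lra.
have [N1 near_p] := cv_p _ e3_gt0; have [N2 near_w] := cv_w _ e3_gt0.
exists ((N1 + N2).+1 * (N1 + N2).+1)%coq_nat => n n_ge.
have [_ sq_gt] := Nat.sqrt_spec n.+1 (Nat.le_0_l _); have := bracket n.+1.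
move: (Nat.sqrt n.+1) sq_gt => s sq_gt bracket_n.
have s_gt : (N1 + N2 < s)%coq_nat.
  apply/Nat.nle_gt => s_le.
  have := Nat.mul_le_mono _ _ _ _ (le_n_S _ _ s_le) (le_n_S _ _ s_le); lia.
have def_s : s = s.-1.+1 by rewrite prednK //; apply/ltP; lia.
have def_sq : (n.+1 * n.+1)%N = (n.+1 * n.+1).-1.+1 by [].
have := near_p s.-1 ltac:(lia); have := near_w s.-1 ltac:(lia).
have := near_w (n.+1 * n.+1).-1 ltac:(lia).
rewrite -def_s -def_sq /R_dist; move: bracket_n.
by split_Rabs; lra.
Qed.

Lemma Un_cv_Rinv (u : nat -> R) l : l <> 0 -> Un_cv u l -> Un_cv (fun n => / u n) (/ l).
Proof.
move=> l_neq0; apply: continuity_seq.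
by apply: continuity_pt_inv => //; apply/derivable_continuous_pt/derivable_pt_id.
Qed.

Lemma Un_cv_cancel_factor (u v : nat -> R) a b :
  Un_cv (fun n => u n * v n) a -> Un_cv u b -> (forall n, u n <> 0) -> b <> 0 ->
  Un_cv v (a / b).
Proof.
move=> cv_uv cv_u u_neq0 b_neq0.
apply: (Un_cv_ext (fun n => (u n * v n) * / u n)); first by move=> n; field.
exact: CV_mult cv_uv (Un_cv_Rinv b_neq0 cv_u).
Qed.

Section UnitaryPairs.
Local Open Scope nat_scope.

Fixpoint unitary_pairs (L : seq nat) : seq (nat * nat) :=
  if L is q :: L' then
    [seq (q * r.1, r.2) | r <- unitary_pairs L'] ++
    [seq (r.1, q * r.2) | r <- unitary_pairs L']
  else [:: (1, 1)].

Lemma unitary_pairs_gt0 (L : seq nat) : all (leq 1) L ->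
  all (fun r => (0 < r.1) && (0 < r.2)) (unitary_pairs L).
Proof.
elim: L => [|q L IH] //= /andP[q_gt0 /IH /allP L_gt0].
by rewrite all_cat !all_map; apply/andP; split; apply/allP=> r /L_gt0 /andP[] /=;
  rewrite ?muln_gt0 q_gt0 => -> ->.
Qed.

Lemma coprime_factor_dvd q n d f : 0 < q -> coprime q f -> d * f = q * n ->
  exists2 d', d = q * d' & d' * f = n.
Proof.
move=> q_gt0 cop_qf def_df.
have q_d : q %| d by rewrite -(Gauss_dvdl _ cop_qf) def_df dvdn_mulr.
exists (d %/ q); first by rewrite mulnC divnK.
by apply/eqP; rewrite -(eqn_pmul2l q_gt0) mulnA [q * _]mulnC divnK // def_df.
Qed.

Lemma coprime_prime_prod p (P : seq nat) (e : nat -> nat) :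
  prime p -> all prime P -> p \notin P -> coprime p (\prod_(q <- P) q ^ e q).
Proof.
move=> pr_p /allP prP pP; rewrite big_seq.
apply: (big_ind (coprime p)) => [|a b|q qP]; first exact: coprimen1.
  by rewrite coprimeMr => ->.
rewrite coprimeXr // prime_coprime // dvdn_prime2 // ?prP //.
by apply/eqP=> def_p; rewrite def_p qP in pP.
Qed.

Lemma mem_unitary_pairs (P : seq nat) (e : nat -> nat) d f :
  uniq P -> all prime P -> {in P, forall p, 0 < e p} ->
  ((d, f) \in unitary_pairs [seq p ^ e p | p <- P]) =
  (d * f == \prod_(p <- P) p ^ e p) && coprime d f.
Proof.
elim: P d f => [|p P IH] d f.
  move=> _ _ _; rewrite big_nil inE xpair_eqE muln_eq1.
  by case: eqP => [->|]; case: eqP => [->|] //; rewrite andbF.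
case/andP=> pP uP /andP[pr_p prP] e_gt0.
have e_gt0' : {in P, forall q, 0 < e q} by move=> q qP; rewrite e_gt0 // inE qP orbT.
have {}IH d' f' := IH d' f' uP prP e_gt0'.
have ep_gt0 : 0 < e p by rewrite e_gt0 ?mem_head.
set q := p ^ e p; set n := \prod_(p <- P) p ^ e p.
have cop_pn : coprime p n by apply: coprime_prime_prod.
rewrite /= mem_cat big_cons -/n -/q; apply/idP/idP.
  case/orP=> /mapP[[d' f'] + [-> ->]] /=; rewrite IH -/n => /andP[/eqP def_n cop_df];
    rewrite -def_n coprimeMr in cop_pn; case/andP: cop_pn => cop_pd cop_pf.
    by rewrite -mulnA def_n eqxx coprimeMl cop_df coprimeXl.
  by rewrite mulnCA def_n eqxx coprimeMr cop_df coprime_sym coprimeXl.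
case/andP=> /eqP def_df cop_df.
have q_gt0 : 0 < q by rewrite expn_gt0 prime_gt0.
have : p %| d * f by rewrite def_df dvdn_mulr // dvdn_exp.
rewrite Euclid_dvdM // => /orP[p_d|p_f].
  have cop_qf : coprime q f by rewrite coprimeXl // (coprime_dvdl p_d).
  have [d' def_d def_n] := coprime_factor_dvd q_gt0 cop_qf def_df.
  apply/orP; left; apply/mapP; exists (d', f); rewrite ?def_d // IH -/n def_n eqxx.
  by apply: coprime_dvdl cop_df; rewrite def_d dvdn_mull.
rewrite coprime_sym in cop_df; rewrite mulnC in def_df.
have cop_qd : coprime q d by rewrite coprimeXl // (coprime_dvdl p_f).
have [f' def_f def_n] := coprime_factor_dvd q_gt0 cop_qd def_df.
apply/orP; right; apply/mapP; exists (d, f'); rewrite ?def_f // IH -/n mulnC def_n eqxx.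
by rewrite coprime_sym; apply: coprime_dvdl cop_df; rewrite def_f dvdn_mull.
Qed.

Lemma uniq_unitary_pairs (P : seq nat) (e : nat -> nat) :
  uniq P -> all prime P -> {in P, forall p, 0 < e p} ->
  uniq (unitary_pairs [seq p ^ e p | p <- P]).
Proof.
elim: P => [|p P IH] //= /andP[pP uP] /andP[pr_p prP] e_gt0.
have e_gt0' : {in P, forall q, 0 < e q} by move=> q qP; rewrite e_gt0 // inE qP orbT.
have q_gt1 : 1 < p ^ e p by rewrite -{1}(expn0 p) ltn_exp2l ?prime_gt1 ?e_gt0 ?inE ?eqxx.
have q_gt0 : 0 < p ^ e p by apply: ltnW.
have cop_qn : coprime (p ^ e p) (\prod_(p <- P) p ^ e p).
  by apply: coprimeXl; apply: coprime_prime_prod.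
rewrite cat_uniq !map_inj_in_uniq ?IH //; last 2 first.
- by move=> [a b] [a' b'] _ _ [-> /eqP]; rewrite eqn_pmul2l // => /eqP ->.
- by move=> [a b] [a' b'] _ _ [/eqP]; rewrite eqn_pmul2l // => /eqP -> ->.
rewrite andbT; apply/hasPn=> _ /mapP[[a b] ab_in ->]; apply/mapP=> -[[a' b'] _ [def_a _]].
move: ab_in; rewrite mem_unitary_pairs // => /andP[/eqP def_n _].
have q_n : p ^ e p %| \prod_(p <- P) p ^ e p by rewrite -def_n def_a -mulnA dvdn_mulr.
move: cop_qn; rewrite /coprime (gcdn_idPl q_n) => /eqP q1.
by rewrite q1 in q_gt1.
Qed.

Definition unitary_divisor_pairs (m : nat) : seq (nat * nat) :=
  unitary_pairs [seq p ^ logn p m | p <- primes m].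

Lemma mem_unitary_divisor_pairs m d f : 0 < m ->
  ((d, f) \in unitary_divisor_pairs m) = (d * f == m) && coprime d f.
Proof.
move=> m_gt0; have def_m : \prod_(p <- primes m) p ^ logn p m = m.
  by rewrite [RHS]prod_prime_decomp // prime_decompE big_map.
rewrite mem_unitary_pairs ?primes_uniq ?all_prime_primes ?def_m // => p.
by rewrite logn_gt0.
Qed.

Lemma uniq_unitary_divisor_pairs m : uniq (unitary_divisor_pairs m).
Proof.
by apply: uniq_unitary_pairs; rewrite ?primes_uniq ?all_prime_primes // => p; rewrite logn_gt0.
Qed.

End UnitaryPairs.

Lemma ln_INR_mul a b : (0 < a)%N -> (0 < b)%N -> ln (INR (a * b)) = ln (INR a) + ln (INR b).
Proof. by move=> /ltP a_gt0 /ltP b_gt0; rewrite mult_INR ln_mult //; apply: lt_0_INR. Qed.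

(* Expanding [\prod_q (q^(iy) + q^(-iy))] and taking real parts; the phase [phi]
   makes the induction go through. *)
Lemma sum_unitary_pairs_cos (L : seq nat) (y phi : R) : all (leq 1) L ->
  \sum_(r <- unitary_pairs L) cos (phi + y * ln (INR r.1) - y * ln (INR r.2)) =
  2 ^ size L * \prod_(q <- L) cos (y * ln (INR q)) * cos phi.
Proof.
elim: L phi => [|q L IH] phi /=.
  by move=> _; rewrite big_seq1 big_nil ln_1 !Rmult_0_r Rminus_0_r Rplus_0_r !Rmult_1_l.
move=> /andP[q_gt0 L_gt0]; have /allP r_gt0 := unitary_pairs_gt0 L_gt0.
rewrite big_cat /= !big_map big_cons.
rewrite (eq_big_seq (fun r => cos ((phi + y * ln (INR q)) + y * ln (INR r.1) - y * ln (INR r.2)))); last first.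
  by move=> r /r_gt0 /andP[r1_gt0 _] /=; rewrite ln_INR_mul //; f_equal; ring.
rewrite [X in _ + X](eq_big_seq (fun r => cos ((phi - y * ln (INR q)) + y * ln (INR r.1) - y * ln (INR r.2)))); last first.
  by move=> r /r_gt0 /andP[_ r2_gt0] /=; rewrite ln_INR_mul //; f_equal; ring.
by rewrite !IH // cos_plus cos_minus; ring.
Qed.

Lemma fold_right_Rmult_map (f : nat -> R) (s : seq nat) :
  List.fold_right Rmult 1 (List.map f s) = \prod_(q <- s) f q.
Proof. by elim: s => [|q s IH]; rewrite ?big_nil ?big_cons //= IH. Qed.

Lemma rhs_term_unitary x y m : (0 < m)%N ->
  rhs_term x y m = zeta_real_term x m *
    \sum_(r <- unitary_divisor_pairs m) cos (y * ln (INR r.1) - y * ln (INR r.2)).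
Proof.
move=> m_gt0; have pp_gt0 : all (leq 1) [seq (p ^ logn p m)%N | p <- primes m].
  by apply/allP=> _ /mapP[p /(allP (all_prime_primes m)) pr_p ->]; rewrite expn_gt0 prime_gt0.
have := sum_unitary_pairs_cos y 0 pp_gt0; rewrite size_map big_map cos_0 Rmult_1_r.
under eq_bigr do rewrite Rplus_0_l.
move=> ->; rewrite /rhs_term /omega /cos_prod fold_right_Rmult_map /zeta_real_term.
by rewrite Rpower_Ropp /Rdiv; ring.
Qed.

Section Windows.
Local Open Scope nat_scope.

Definition box (L : nat) : seq (nat * nat) := [seq (a, b) | a <- iota 1 L, b <- iota 1 L].

Definition coprime_pairs (N : nat) : seq (nat * nat) :=
  [seq r | m <- iota 1 N, r <- unitary_divisor_pairs m].

(* [(k * d, k * f)] with [k <= N], [d * f <= N] and [coprime d f]: the pairs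
   [(a, b)] with [gcdn a b <= N] and [a * b <= N * gcdn a b ^ 2]. *)
Definition window (N : nat) : seq (nat * nat) :=
  [seq (k * r.1, k * r.2) | k <- iota 1 N, r <- coprime_pairs N].

Lemma mem_box L a b : ((a, b) \in box L) = (0 < a <= L) && (0 < b <= L).
Proof.
apply/allpairsP/andP=> [[[a' b'] [/= + + [-> ->]]]|[a_in b_in]].
  by rewrite !mem_iota !add1n !ltnS => -> ->.
by exists (a, b); rewrite !mem_iota !add1n !ltnS.
Qed.

Lemma uniq_box L : uniq (box L).
Proof. by apply: allpairs_uniq; rewrite ?iota_uniq // => -[a b] [a' b'] _ _ [-> ->]. Qed.

Lemma mem_coprime_pairs N d f :
  ((d, f) \in coprime_pairs N) = (0 < d * f <= N) && coprime d f.
Proof.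
apply/allpairsPdep/andP=> [[m [r [+ + def_r]]]|[df_in cop_df]].
  rewrite mem_iota add1n ltnS => m_in; have m_gt0 : 0 < m by case/andP: m_in.
  by case: r def_r => d' f' [-> ->]; rewrite mem_unitary_divisor_pairs // => /andP[/eqP ->].
exists (d * f), (d, f); rewrite mem_iota add1n ltnS df_in mem_unitary_divisor_pairs ?eqxx //.
by case/andP: df_in.
Qed.

Lemma uniq_coprime_pairs N : uniq (coprime_pairs N).
Proof.
apply: allpairs_uniq_dep => [|m _|]; rewrite ?iota_uniq ?uniq_unitary_divisor_pairs //.
move=> _ _ /allpairsPdep[m [[d f] [m_in df_in ->]]] /allpairsPdep[m' [r' [m'_in r'_in ->]]] /=.
move=> def_r'; move: r'_in; rewrite -def_r' => df_in'.
move: m_in m'_in; rewrite !mem_iota !add1n !ltnS => /andP[m_gt0 _] /andP[m'_gt0 _].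
move: df_in df_in'; rewrite !mem_unitary_divisor_pairs // => /andP[/eqP <- _] /andP[/eqP def_m' _].
by rewrite -def_m'.
Qed.

Lemma gcdn_mul_coprime k d f : coprime d f -> gcdn (k * d) (k * f) = k.
Proof. by move=> cop_df; rewrite -muln_gcdr (eqP cop_df) muln1. Qed.

Lemma uniq_window N : uniq (window N).
Proof.
apply: allpairs_uniq; rewrite ?iota_uniq ?uniq_coprime_pairs //.
move=> _ _ /allpairsP[[k [d f]] [/= k_in + ->]] /allpairsP[[k' [d' f']] [/= k'_in + ->]] /=.
rewrite !mem_coprime_pairs => /andP[_ cop_df] /andP[_ cop_df'] [def_a def_b].
have def_k : k = k' by rewrite -(gcdn_mul_coprime k cop_df) def_a def_b gcdn_mul_coprime.
move: k_in def_a def_b; rewrite def_k mem_iota add1n => /andP[k_gt0 _].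
by move=> /eqP; rewrite eqn_pmul2l // => /eqP -> /eqP; rewrite eqn_pmul2l // => /eqP ->.
Qed.

Lemma window_sub_box N : {subset window N <= box (N * N)}.
Proof.
move=> _ /allpairsP[[k [d f]] [/= + + ->]] /=.
rewrite mem_iota add1n ltnS mem_coprime_pairs mem_box => /andP[k_gt0 kN] /andP[/andP[df_gt0 dfN] _].
move: df_gt0; rewrite muln_gt0 => /andP[d_gt0 f_gt0].
have dN : d <= N by apply: leq_trans dfN; rewrite leq_pmulr.
have fN : f <= N by apply: leq_trans dfN; rewrite leq_pmull.
by rewrite !muln_gt0 k_gt0 d_gt0 f_gt0 !leq_mul.
Qed.

Lemma box_sub_window L N : L * L <= N -> {subset box L <= window N}.
Proof.
move=> LLN [a b]; rewrite mem_box => /andP[/andP[a_gt0 aL] /andP[b_gt0 bL]].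
set k := gcdn a b; have k_gt0 : 0 < k by rewrite gcdn_gt0 a_gt0.
have k_a : k %| a by apply: dvdn_gcdl.
have k_b : k %| b by apply: dvdn_gcdr.
have def_a : a = k * (a %/ k) by rewrite mulnC divnK.
have def_b : b = k * (b %/ k) by rewrite mulnC divnK.
have LN : L <= N by apply: leq_trans LLN; rewrite leq_pmulr // (leq_trans a_gt0).
apply/allpairsP; exists (k, (a %/ k, b %/ k)); split => /=; rewrite -?def_a -?def_b //.
  by rewrite mem_iota add1n ltnS k_gt0 (leq_trans (dvdn_leq a_gt0 k_a) (leq_trans aL LN)).
rewrite mem_coprime_pairs muln_gt0 !divn_gt0 // (dvdn_leq a_gt0 k_a) (dvdn_leq b_gt0 k_b) /=.
rewrite (leq_trans _ LLN) ?(leq_mul (leq_trans (leq_div a k) aL) (leq_trans (leq_div b k) bL)) //=.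
by rewrite /coprime -(eqn_pmul2l k_gt0) muln_gcdr -def_a -def_b muln1.
Qed.

End Windows.

Definition psum (F : nat -> R) (L : nat) : R := \sum_(n <- iota 1 L) F n.

Lemma sum_f_R0_psum F N : sum_f_R0 (fun n => F n.+1) N = psum F N.+1.
Proof.
elim: N => [|N IH]; first by rewrite /psum big_seq1.
by rewrite /= IH /psum -(addn1 N.+1) iotaD big_cat big_seq1 /= add1n addn1.
Qed.

Lemma infinite_sum_psum F l :
  infinite_sum (fun n => F n.+1) l <-> Un_cv (fun n => psum F n.+1) l.
Proof. by split; apply: Un_cv_ext => n; rewrite sum_f_R0_psum. Qed.

Lemma psum_mono F a b : (forall n, 0 <= F n) -> (a <= b)%N -> psum F a <= psum F b.
Proof.
move=> F_ge0 ab; rewrite /psum -(subnKC ab) iotaD big_cat /=.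
rewrite -[X in X <= _]Rplus_0_r; apply: Rplus_le_compat_l.
by apply: Rsum_ge0 => n _.
Qed.

Lemma zeta_real_term_gt0 s n : 0 < zeta_real_term s n.
Proof. exact: exp_pos. Qed.

Lemma zeta_real_termM s a b : (0 < a)%N -> (0 < b)%N ->
  zeta_real_term s (a * b) = zeta_real_term s a * zeta_real_term s b.
Proof.
by move=> /ltP a_gt0 /ltP b_gt0; rewrite /zeta_real_term mult_INR Rpower_mult_distr //; apply: lt_0_INR.
Qed.

Lemma zeta_real_term_double x n :
  zeta_real_term (2 * x) n = zeta_real_term x n * zeta_real_term x n.
Proof. by rewrite /zeta_real_term -Rpower_plus; congr Rpower; ring. Qed.

Lemma zeta_real_term_antitone s a b : 0 <= s -> (0 < a)%N -> (a <= b)%N ->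
  zeta_real_term s b <= zeta_real_term s a.
Proof.
move=> s_ge0 /ltP a_gt0 /leP ab; rewrite /zeta_real_term !Rpower_Ropp.
apply: Rinv_le_contravar; first exact: exp_pos.
by apply: Rle_Rpower_l => //; split; [apply: lt_0_INR | apply: le_INR].
Qed.

Lemma Rabs_zeta_re_term_le x y n : Rabs (zeta_re_term x y n) <= zeta_real_term x n.
Proof. exact: Rabs_mul_le (Rlt_le _ _ (zeta_real_term_gt0 x n)) (Rabs_le _ _ (COS_bound _)). Qed.

Lemma Rabs_zeta_im_term_le x y n : Rabs (zeta_im_term x y n) <= zeta_real_term x n.
Proof.
rewrite Rabs_Ropp.
exact: Rabs_mul_le (Rlt_le _ _ (zeta_real_term_gt0 x n)) (Rabs_le _ _ (SIN_bound _)).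
Qed.

Lemma psum_zeta_real_gt0 s n : 0 < psum (zeta_real_term s) n.+1.
Proof.
rewrite /psum /= big_cons; apply: Rplus_lt_le_0_compat; first exact: zeta_real_term_gt0.
by apply: Rsum_ge0 => k _; apply/Rlt_le/zeta_real_term_gt0.
Qed.

Lemma Rpower2_lt1 s : 1 < s -> 0 < Rpower 2 (1 - s) < 1.
Proof.
move=> s_gt1; split; first exact: exp_pos.
have ln2_gt0 : 0 < ln 2 by rewrite -ln_1; apply: ln_increasing; lra.
by rewrite /Rpower -[X in _ < X]exp_0; apply: exp_increasing; nra.
Qed.

(* Cauchy condensation: each of these [2^K] terms is at most [(2^K)^(-s)]. *)
Lemma dyadic_block_le s K : 0 <= s ->
  \sum_(n <- iota (2 ^ K) (2 ^ K)) zeta_real_term s n <= Rpower 2 (1 - s) ^ K.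
Proof.
move=> s_ge0; apply: Rle_trans (Rsum_le_const (c := zeta_real_term s (2 ^ K)) _) _.
  move=> n; rewrite mem_iota => /andP[Kn _].
  by apply: zeta_real_term_antitone; rewrite ?expn_gt0.
have pow2 : INR (2 ^ K) = Rpower 2 (INR K).
  rewrite Rpower_pow; last lra.
  by elim: K {s_ge0} => [|K IH] //; rewrite expnS mult_INR IH /=.
rewrite size_iota /zeta_real_term pow2 Rpower_mult -Rpower_plus -Rpower_pow; last exact: exp_pos.
by rewrite Rpower_mult; apply: Req_le; congr Rpower; ring.
Qed.

Lemma psum_zeta_real_dyadic s K : 1 < s ->
  psum (zeta_real_term s) (2 ^ K - 1) <= (1 - Rpower 2 (1 - s) ^ K) / (1 - Rpower 2 (1 - s)).
Proof.
move=> s_gt1; have [r_gt0 r_lt1] := Rpower2_lt1 s_gt1; set r := Rpower 2 (1 - s) in r_gt0 r_lt1 *.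
elim: K => [|K IH].
  by rewrite expn0 subnn /psum big_nil /= Rminus_diag /Rdiv Rmult_0_l; lra.
have K_gt0 : (0 < 2 ^ K)%N by rewrite expn_gt0.
have -> : (2 ^ K.+1 - 1 = (2 ^ K - 1) + 2 ^ K)%N by rewrite expnS mul2n -addnn addnBAC.
rewrite /psum iotaD big_cat (subnKC K_gt0) /=.
apply: Rle_trans (Rplus_le_compat _ _ _ _ IH (dyadic_block_le K _)) _; first lra.
rewrite -/r; apply: Req_le; field; lra.
Qed.

Lemma zeta_real_cv s : 1 < s -> {l | infinite_sum (fun n => zeta_real_term s n.+1) l}.
Proof.
move=> s_gt1; have [r_gt0 r_lt1] := Rpower2_lt1 s_gt1.
apply: growing_cv => [n|]; first by have := zeta_real_term_gt0 s n.+2; rewrite /=; lra.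
exists (1 / (1 - Rpower 2 (1 - s))) => _ [n ->].
rewrite sum_f_R0_psum; apply: Rle_trans (psum_mono _ (_ : n.+1 <= 2 ^ n.+1 - 1)%N) _.
- by move=> m; apply: Rlt_le; apply: zeta_real_term_gt0.
- by rewrite leq_subRL ?expn_gt0 // add1n ltn_expl.
apply: Rle_trans (psum_zeta_real_dyadic n.+1 s_gt1) _.
apply: Rmult_le_compat_r; first by apply/Rlt_le/Rinv_0_lt_compat; lra.
by have := pow_lt _ n.+1 r_gt0; lra.
Qed.

Lemma dominated_series_cv x (u : nat -> R) : 1 < x ->
  (forall n, Rabs (u n) <= zeta_real_term x n) -> {l | infinite_sum (fun n => u n.+1) l}.
Proof.
move=> x_gt1 u_le; apply/cv_cauchy_2/cauchy_abs/cv_cauchy_1.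
apply: (Rseries_CV_comp _ (fun n => zeta_real_term x n.+1)); last exact: zeta_real_cv.
by move=> n; split; [apply: Rabs_pos | apply: u_le].
Qed.

Definition zeta_pair_term (x y : R) (p : nat * nat) : R :=
  zeta_real_term x p.1 * zeta_real_term x p.2 * cos (y * ln (INR p.1) - y * ln (INR p.2)).

Lemma Rabs_zeta_pair_term_le x y p :
  Rabs (zeta_pair_term x y p) <= zeta_real_term x p.1 * zeta_real_term x p.2.
Proof.
apply: Rabs_mul_le (Rabs_le _ _ (COS_bound _)).
by apply/Rlt_le/Rmult_lt_0_compat; apply: zeta_real_term_gt0.
Qed.

Lemma sum_box_pair_term x y L :
  \sum_(p <- box L) zeta_pair_term x y p =
  psum (zeta_re_term x y) L * psum (zeta_re_term x y) L +
  psum (zeta_im_term x y) L * psum (zeta_im_term x y) L.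
Proof.
rewrite /box big_allpairs /psum !big_distrlr -big_split.
apply: eq_bigr => a _; rewrite -big_split; apply: eq_bigr => b _.
by rewrite /zeta_pair_term /zeta_re_term /zeta_im_term /zeta_real_term /= cos_minus; ring.
Qed.

Lemma sum_box_weights x L :
  \sum_(p <- box L) zeta_real_term x p.1 * zeta_real_term x p.2 =
  psum (zeta_real_term x) L * psum (zeta_real_term x) L.
Proof. by rewrite /box big_allpairs /psum big_distrlr. Qed.

Lemma sum_window_pair_term x y N :
  \sum_(p <- window N) zeta_pair_term x y p =
  psum (zeta_real_term (2 * x)) N * psum (rhs_term x y) N.
Proof.
rewrite /window big_allpairs_dep /psum big_distrl; apply: eq_big_seq => k.
rewrite mem_iota add1n ltnS => /andP[k_gt0 _].
rewrite /coprime_pairs big_allpairs_dep big_distrr; apply: eq_big_seq => m.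
rewrite mem_iota add1n ltnS => /andP[m_gt0 _].
rewrite rhs_term_unitary // zeta_real_term_double !big_distrr; apply: eq_big_seq => -[d f].
rewrite mem_unitary_divisor_pairs // => /andP[/eqP def_m _].
have /andP[d_gt0 f_gt0] : (0 < d)%N && (0 < f)%N by rewrite -muln_gt0 def_m.
rewrite /zeta_pair_term /= -def_m !zeta_real_termM ?muln_gt0 ?d_gt0 // !ln_INR_mul //.
have -> : y * (ln (INR k) + ln (INR d)) - y * (ln (INR k) + ln (INR f)) =
  y * ln (INR d) - y * ln (INR f) by ring.
by ring.
Qed.

Lemma window_sum_bracket x y N L : (L * L <= N)%N ->
  Rabs (psum (zeta_real_term (2 * x)) N * psum (rhs_term x y) N -
        (psum (zeta_re_term x y) L * psum (zeta_re_term x y) L +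
         psum (zeta_im_term x y) L * psum (zeta_im_term x y) L))
  <= psum (zeta_real_term x) (N * N) * psum (zeta_real_term x) (N * N) -
     psum (zeta_real_term x) L * psum (zeta_real_term x) L.
Proof.
move=> LLN; rewrite -sum_window_pair_term -sum_box_pair_term -!sum_box_weights.
apply: Rabs_sum_diff_le; rewrite ?uniq_box ?uniq_window //.
- exact: box_sub_window.
- exact: window_sub_box.
- by move=> p _; apply: Rabs_zeta_pair_term_le.
Qed.

Lemma cv_window_products x y re im : 1 < x ->
  infinite_sum (fun n => zeta_re_term x y n.+1) re ->
  infinite_sum (fun n => zeta_im_term x y n.+1) im ->
  Un_cv (fun n => psum (zeta_real_term (2 * x)) n.+1 * psum (rhs_term x y) n.+1)
        (re * re + im * im).
Proof.
move=> x_gt1 /infinite_sum_psum cv_re /infinite_sum_psum cv_im.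
have [zx /infinite_sum_psum cv_zx] := zeta_real_cv x_gt1.
pose P L := psum (zeta_re_term x y) L * psum (zeta_re_term x y) L +
             psum (zeta_im_term x y) L * psum (zeta_im_term x y) L.
pose W L := psum (zeta_real_term x) L * psum (zeta_real_term x) L.
apply: (@Un_cv_sqrt_bracket (fun N => psum (zeta_real_term (2 * x)) N * psum (rhs_term x y) N)
  P W _ (zx * zx)).
- by apply: CV_plus; apply: CV_mult.
- exact: CV_mult.
- by move=> N; apply: window_sum_bracket; apply: sqrt_square_le.
Qed.

Unset Implicit Arguments.

Theorem mainTheorem4 (x y : R) (hx : 1 < x) :
  exists re im z2x T : R,
    infinite_sum (fun n => zeta_re_term x y (S n)) re /\
    infinite_sum (fun n => zeta_im_term x y (S n)) im /\
    infinite_sum (fun n => zeta_real_term (2 * x) (S n)) z2x /\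
    infinite_sum (fun n => rhs_term x y (S n)) T /\
    re * re + im * im = z2x * T.
Proof.
have [re cv_re] := dominated_series_cv hx (Rabs_zeta_re_term_le x y).
have [im cv_im] := dominated_series_cv hx (Rabs_zeta_im_term_le x y).
have [z2x cv_z2x] := zeta_real_cv (ltac:(lra) : 1 < 2 * x).
have z2x_gt0 : 0 < z2x.
  apply: Rlt_le_trans (zeta_real_term_gt0 (2 * x) 1) _ => /=.
  by have := sum_incr _ 0 _ cv_z2x (fun n => Rlt_le _ _ (zeta_real_term_gt0 _ _)).
exists re, im, z2x, ((re * re + im * im) / z2x); do !split => //.
  apply/infinite_sum_psum; move/infinite_sum_psum: cv_z2x => cv_z2x.
  apply: (Un_cv_cancel_factor (cv_window_products hx cv_re cv_im) cv_z2x).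
  - by move=> n; apply/Rgt_not_eq/psum_zeta_real_gt0.
  - exact: Rgt_not_eq.
by field; apply: Rgt_not_eq.
Qed.
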